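(* Let $R$ be a real closed field and let $V$ be an affine $R$-variety that is the union of two closed subvarieties $V_1$ and $V_2$ intersecting transversally in a single real point. Let $f\in R[V]$. If $f|_{V_1}$ is a sum of squares in $R[V_1]$ and $f|_{V_2}$ is a sum of squares in $R[V_2]$, then $f$ is a sum of squares in $R[V]$.
   Context: A variety is a reduced separated scheme of finite type, not necessarily irreducible; $R[W]$ denotes the coordinate ring of an affine variety $W$. For closed subvarieties $V_1,V_2$ of an affine $R$-variety $V$ meeting in finitely many points $P_1,\dots,P_r$, the intersection is called transversal if $I_{V_1}+I_{V_2}=\bigcap_{i=1}^r\mathfrak{m}_{P_i}$, where $I_{W}\subset R[V]$ is the vanishing ideal of $W$ and $\mathfrak{m}_P$ is the maximal ideal of the point $P$. A point is real if its residue field is $R$. *)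

From HB Require Import structures.
From mathcomp Require Import all_boot all_algebra.
From mathcomp Require Import mpoly.
Set Implicit Arguments. Unset Strict Implicit. Unset Printing Implicit Defensive.
Import GRing.Theory Num.Theory.
Local Open Scope ring_scope.

(* Affine R-varieties are encoded by their coordinate rings presented as
   quotients R[x_1..x_n]/I of a polynomial ring by a radical ideal I. *)

Definition is_ideal (R : comRingType) (n : nat) (I : {mpoly R[n]} -> Prop) : Prop :=
  [/\ I 0,
      (forall p q, I p -> I q -> I (p + q)) &
      (forall p q, I q -> I (p * q))].

Definition is_radical (R : comRingType) (n : nat) (I : {mpoly R[n]} -> Prop) : Prop :=
  forall p k, I (p ^+ k.+1) -> I p.

Definition is_vanishing_ideal (R : comRingType) (n : nat) (I : {mpoly R[n]} -> Prop) : Prop :=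
  is_ideal I /\ is_radical I.

Definition ideal_sum (R : comRingType) (n : nat) (I J : {mpoly R[n]} -> Prop) :
  {mpoly R[n]} -> Prop :=
  fun p => exists a b, [/\ I a, J b & p = a + b].

Definition max_ideal_pt (R : comRingType) (n : nat) (a : 'I_n -> R) :
  {mpoly R[n]} -> Prop :=
  fun p => p.@[a] = 0.

Definition sos_mod (R : comRingType) (n : nat) (I : {mpoly R[n]} -> Prop)
  (f : {mpoly R[n]}) : Prop :=
  exists s : seq {mpoly R[n]}, I (f - \sum_(g <- s) g ^+ 2).

From mathcomp Require Import all_boot all_algebra.
From mathcomp Require Import mpoly.
From mathcomp Require Import ring.
Set Implicit Arguments. Unset Strict Implicit. Unset Printing Implicit Defensive.
Import order.Order.TTheory GRing.Theory Num.Theory.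
Local Open Scope ring_scope.

(* At the point a both representations give f(a) = sum g_i(a)^2.  Over a real
   closed field an orthogonal change of the squares turns each representation
   into t^2 + sum r_j^2 with t(a) = sqrt f(a) and all r_j(a) = 0.  Since
   I1 + I2 is the maximal ideal of a, two polynomials with the same value at a
   are congruent, modulo I1 and I2 respectively, to one common polynomial.
   Gluing t1 with t2, and each r_j with 0, yields a sum of squares congruent to
   f modulo I1 and modulo I2, hence modulo I = I1 /\ I2. *)

Definition sumsq {P : comPzRingType} (s : seq P) : P := \sum_(g <- s) g ^+ 2.

Lemma sumsq_nil (P : comPzRingType) : sumsq [::] = 0 :> P.
Proof. exact: big_nil. Qed.

Lemma sumsq_cons (P : comPzRingType) (g : P) s : sumsq (g :: s) = g ^+ 2 + sumsq s.
Proof. exact: big_cons. Qed.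

Lemma sumsq_cat (P : comPzRingType) (s s' : seq P) :
  sumsq (s ++ s') = sumsq s + sumsq s'.
Proof. exact: big_cat. Qed.

Lemma sumsq_shift (P : comPzRingType) (c : P -> P) (t : P) s :
  sumsq [seq g - c g * t | g <- s] =
  sumsq s - 2%:R * t * \sum_(g <- s) c g * g + t ^+ 2 * \sum_(g <- s) c g ^+ 2.
Proof.
elim: s => [|g s IH]; first by rewrite /sumsq !big_nil; ring.
by rewrite map_cons !sumsq_cons IH !big_cons; ring.
Qed.

Section Ideals.
Variables (R : comRingType) (n : nat) (I : {mpoly R[n]} -> Prop).
Hypothesis hI : is_ideal I.

Lemma ideal0 : I 0.
Proof. by case: hI. Qed.

Lemma idealD p q : I p -> I q -> I (p + q).
Proof. by case: hI => _ hD _; apply: hD. Qed.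

Lemma idealMl p q : I q -> I (p * q).
Proof. by case: hI => _ _ hM; apply: hM. Qed.

Lemma idealN p : I p -> I (- p).
Proof. by move=> Ip; rewrite -mulN1r; apply: idealMl. Qed.

Lemma idealB p q : I p -> I q -> I (p - q).
Proof. by move=> Ip Iq; apply/idealD/idealN. Qed.

Lemma ideal_sub_common p q r : I (p - q) -> I (r - q) -> I (p - r).
Proof.
move=> Ipq Irq; have -> : p - r = (p - q) - (r - q) by ring.
exact: idealB.
Qed.

Lemma ideal_subX2 p q : I (p - q) -> I (p ^+ 2 - q ^+ 2).
Proof.
move=> Ipq; have -> : p ^+ 2 - q ^+ 2 = (p + q) * (p - q) by ring.
exact: idealMl.
Qed.

End Ideals.

Section RotateAtPoint.
Variables (R : rcfType) (n : nat) (a : 'I_n -> R).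
Local Notation P := {mpoly R[n]}.

Lemma meval_sumsq (s : seq P) : (sumsq s).@[a] = \sum_(g <- s) g.@[a] ^+ 2.
Proof. by rewrite rmorph_sum; apply: eq_bigr => g _; rewrite rmorphXn. Qed.

(* The new first square is t = sum_i (g_i(a) / c) g_i with c = sqrt(sum g_i(a)^2),
   and the remaining ones are the g_i - (g_i(a) / c) t, which vanish at a. *)
Lemma sumsq_rotate (s : seq P) :
  exists t (rs : seq P),
    [/\ t.@[a] = Num.sqrt (\sum_(g <- s) g.@[a] ^+ 2),
        all (fun r => r.@[a] == 0) rs &
        sumsq s = t ^+ 2 + sumsq rs].
Proof.
set c := \sum_(g <- s) g.@[a] ^+ 2.
have sqr_a_ge0 (g : P) : 0 <= g.@[a] ^+ 2 by apply: sqr_ge0.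
have c_ge0 : 0 <= c by apply: sumr_ge0.
have [c0|c_neq0] := eqVneq c 0.
  exists 0, s; split; first by rewrite c0 sqrtr0 meval0.
    move: c0 => /eqP; rewrite psumr_eq0 //.
    by apply: sub_all => g /= /eqP/eqP; rewrite sqrf_eq0.
  by rewrite expr0n add0r.
set d := Num.sqrt c.
have d_neq0 : d != 0 by rewrite gt_eqF // sqrtr_gt0 lt_def c_neq0.
have d2 : d ^+ 2 = c by rewrite sqr_sqrtr.
pose e (g : P) := g.@[a] / d.
pose t := \sum_(g <- s) (e g)%:MP * g.
have t_a : t.@[a] = d.
  rewrite /t rmorph_sum /=.
  under eq_bigr => g _ do rewrite mevalM mevalC /e mulrAC -expr2.
  by rewrite -mulr_suml -/c -d2 expr2 mulrK // unitfE.
have e_unit : \sum_(g <- s) ((e g)%:MP : P) ^+ 2 = 1.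
  under eq_bigr => g _ do rewrite -rmorphXn /e expr_div_n.
  by rewrite -rmorph_sum /= -mulr_suml -/c d2 divff.
exists t, [seq g - (e g)%:MP * t | g <- s]; split => //.
  apply/allP => r /mapP [g _ ->] /=.
  by rewrite mevalB mevalM mevalC t_a /e divfK ?subrr.
by rewrite sumsq_shift e_unit -/t; ring.
Qed.

End RotateAtPoint.

Section TransversalGluing.
Variables (R : comRingType) (n : nat) (a : 'I_n -> R).
Variables (I1 I2 : {mpoly R[n]} -> Prop).
Hypotheses (hI1 : is_ideal I1) (hI2 : is_ideal I2).
Hypothesis htrans : forall p, ideal_sum I1 I2 p <-> max_ideal_pt a p.
Local Notation P := {mpoly R[n]}.

Lemma meval_ideal1 p : I1 p -> p.@[a] = 0.
Proof.
move=> Ip; apply/(htrans p).1; exists p, 0.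
by rewrite addr0; split=> //; apply: ideal0.
Qed.

Lemma meval_ideal2 p : I2 p -> p.@[a] = 0.
Proof.
move=> Ip; apply/(htrans p).1; exists 0, p.
by rewrite add0r; split=> //; apply: ideal0.
Qed.

Lemma transversal_glue p q :
  p.@[a] = q.@[a] -> exists r, I1 (r - p) /\ I2 (r - q).
Proof.
move=> pq; have [x [y [Ix Iy xy]]] : ideal_sum I1 I2 (p - q).
  by apply/htrans; rewrite /max_ideal_pt mevalB pq subrr.
exists (p - x); split; first by rewrite addrC addKr; apply: idealN.
by have -> : p - x - q = y by rewrite addrAC xy; ring.
Qed.

Definition sumsq_glue (p q : P) :=
  exists k, I1 (sumsq k - p) /\ I2 (sumsq k - q).

Lemma sumsq_glue0 : sumsq_glue 0 0.
Proof. by exists [::]; rewrite sumsq_nil subrr; split; apply: ideal0. Qed.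

Lemma sumsq_glueD p q p' q' :
  sumsq_glue p q -> sumsq_glue p' q' -> sumsq_glue (p + p') (q + q').
Proof.
move=> [k [Ik1 Ik2]] [k' [Ik'1 Ik'2]]; exists (k ++ k'); rewrite sumsq_cat.
by split; [have := idealD hI1 Ik1 Ik'1 | have := idealD hI2 Ik2 Ik'2];
  congr (_ _); ring.
Qed.

Lemma sumsq_glueX2 u v : u.@[a] = v.@[a] -> sumsq_glue (u ^+ 2) (v ^+ 2).
Proof.
move=> /transversal_glue [r [Ir1 Ir2]]; exists [:: r].
by rewrite sumsq_cons sumsq_nil addr0; split; apply: ideal_subX2.
Qed.

Lemma sumsq_glue_vanishing (rs : seq P) : all (fun r => r.@[a] == 0) rs ->
  sumsq_glue (sumsq rs) 0 /\ sumsq_glue 0 (sumsq rs).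
Proof.
elim: rs => [|r rs IH]; first by rewrite sumsq_nil; split; apply: sumsq_glue0.
move=> /= /andP [/eqP r0 /IH [IHl IHr]]; rewrite sumsq_cons.
have r_a : r.@[a] = (0 : P).@[a] by rewrite r0 meval0.
have := sumsq_glueX2 r_a; have := sumsq_glueX2 (esym r_a).
rewrite expr0n /= -[0]addr0 => glue_l glue_r.
by split; apply: sumsq_glueD.
Qed.

End TransversalGluing.

Theorem proposition2p2 (R : rcfType) (n : nat)
  (I I1 I2 : {mpoly R[n]} -> Prop)
  (hI : is_vanishing_ideal I)
  (hI1 : is_vanishing_ideal I1) (hI2 : is_vanishing_ideal I2)
  (hsub1 : forall p, I p -> I1 p) (hsub2 : forall p, I p -> I2 p)
  (hunion : forall p, (I1 p /\ I2 p) <-> I p)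
  (a : 'I_n -> R)
  (htrans : forall p, ideal_sum I1 I2 p <-> max_ideal_pt a p)
  (f : {mpoly R[n]}) :
  sos_mod I1 f -> sos_mod I2 f -> sos_mod I f.
Proof.
case: hI1 hI2 => [h1 _] [h2 _] [s1 Hs1] [s2 Hs2].
rewrite -/(sumsq s1) in Hs1; rewrite -/(sumsq s2) in Hs2.
have f_a1 : f.@[a] = (sumsq s1).@[a].
  by apply/eqP; rewrite -subr_eq0 -mevalB (meval_ideal1 h2 htrans Hs1).
have f_a2 : f.@[a] = (sumsq s2).@[a].
  by apply/eqP; rewrite -subr_eq0 -mevalB (meval_ideal2 h1 htrans Hs2).
have [t1 [r1 [t1_a r1_a s1_rot]]] := sumsq_rotate a s1.
have [t2 [r2 [t2_a r2_a s2_rot]]] := sumsq_rotate a s2.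
have t12 : t1.@[a] = t2.@[a] by rewrite t1_a t2_a -!meval_sumsq -f_a1 -f_a2.
have [glue_r1 _] := sumsq_glue_vanishing h1 h2 htrans r1_a.
have [_ glue_r2] := sumsq_glue_vanishing h1 h2 htrans r2_a.
have [k [Hk1 Hk2]] :=
  sumsq_glueD h1 h2 (sumsq_glueD h1 h2 (sumsq_glueX2 h1 h2 htrans t12) glue_r1)
    glue_r2.
rewrite addr0 -s1_rot in Hk1; rewrite addr0 -s2_rot in Hk2.
exists k; apply/hunion.
by split; [apply: ideal_sub_common Hs1 Hk1 | apply: ideal_sub_common Hs2 Hk2].
Qed.
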